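(* Assume the setting of the context, fix $\Delta=(h,\Delta x)$, and fix a policy $\mathsf{c}=(\mathsf{c}_{i,j})$ with $\mathsf{c}_{i,j}\in\mathcal{C}^\Delta_j(x_i)$ for all $i\in\mathbb{N}$, $j=1,2$. If $\mathbf{U},\mathbf{V}\in B(\mathcal{A}^{\Delta x})^2$ satisfy $$F^\Delta_j\big(x_i,\mathsf{c}_{i,j},(U_{i,j},U_{i,\bar\jmath}),U_{\cdot,j}\big)\le0\quad\text{and}\quad F^\Delta_j\big(x_i,\mathsf{c}_{i,j},(V_{i,j},V_{i,\bar\jmath}),V_{\cdot,j}\big)\ge0\qquad\forall i\in\mathbb{N},\ j=1,2,$$ then $U_{i,j}\le V_{i,j}$ for all $i,j$.
   Context: Constants: $\rho>0$, $r<\rho$, $0<y_1<y_2$, $\gamma>1$, $\underline{x}\le0$ with $\rho\underline{x}+y_j>0$, $\lambda_1,\lambda_2\ge0$; $\bar\jmath=3-j$; $u(c)=\frac{c^{1-\gamma}}{1-\gamma}$ for $c>0$, $u(0)=-\infty$. Discretization $\Delta=(h,\Delta x)$, $h,\Delta x>0$, $\rho h<1$, $\lambda_jh<1$. Grid $x_i=\underline{x}+i\Delta x$, $i\in\mathbb{N}=\{0,1,\dots\}$; $B(\mathcal{A}^{\Delta x})$ = bounded real sequences indexed by $\mathbb{N}$. $\beta_k(x)=\max\{0,1-|x-x_k|/\Delta x\}$ for $x\ge\underline{x}$. $\mathcal{C}^\Delta_j(x_i)=\{c\ge0:x_i+h(rx_i+y_j-c)\ge\underline{x}\}$, $s_{i,j}(c)=rx_i+y_j-c$.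 Linearized scheme, for fixed $c\ge0$: $$F^\Delta_j(x_i,c,(\mathsf{q}_j,\mathsf{q}_{\bar\jmath}),\mathsf{U})=\rho\mathsf{q}_j-(1-\rho h)\lambda_j(\mathsf{q}_{\bar\jmath}-\mathsf{q}_j)-\Big(u(c)+\frac{(1-\rho h)(1-\lambda_jh)}{h}\Big(\sum_k\beta_k(x_i+hs_{i,j}(c))\mathsf{U}_k-\mathsf{q}_j\Big)\Big).$$ *)

From Stdlib Require Import Reals.
From Coquelicot Require Import Coquelicot.
Open Scope R_scope.

Definition jbar (j : nat) : nat := (3 - j)%nat.

Definition util (gamma c : R) : Rbar :=
  if Rlt_dec 0 c then Finite (Rpower c (1 - gamma) / (1 - gamma)) else m_infty.

Definition grid (xlow dx : R) (i : nat) : R := xlow + INR i * dx.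

Definition beta (xlow dx : R) (k : nat) (x : R) : R :=
  Rmax 0 (1 - Rabs (x - grid xlow dx k) / dx).

Definition drift (r : R) (y : nat -> R) (xlow dx : R) (i j : nat) (c : R) : R :=
  r * grid xlow dx i + y j - c.

Definition admissible (r : R) (y : nat -> R) (xlow h dx : R) (i j : nat) (c : R) : Prop :=
  0 <= c /\ grid xlow dx i + h * drift r y xlow dx i j c >= xlow.

Definition bounded_seq (U : nat -> R) : Prop := exists M, forall i, Rabs (U i) <= M.

(* Linearized scheme F^Δ_j(x_i, c, (q_j, q_jbar), U), valued in Rbar
   (it equals +∞ exactly when c = 0, since u(0) = -∞). *)
Definition Fscheme (rho r gamma : R) (y lam : nat -> R) (xlow h dx : R)
    (j i : nat) (c qj qjb : R) (U : nat -> R) : Rbar :=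
  Rbar_minus
    (Finite (rho * qj - (1 - rho * h) * lam j * (qjb - qj)))
    (Rbar_plus (util gamma c)
       (Finite ((1 - rho * h) * (1 - lam j * h) / h *
          (Series (fun k => beta xlow dx k (grid xlow dx i + h * drift r y xlow dx i j c) * U k)
           - qj)))).

(* Subtracting the sub- and supersolution inequalities at the same control
   [c_{i,j}] cancels the utility term (and [c_{i,j} > 0], since [u(0) = -oo]
   would make [F] infinite), leaving for [W := U - V]
     (rho + a_j + K_j) W_{i,j} <= a_j W_{i,jbar} + K_j sum_k beta_k(p) W_{k,j}
   with [a_j, K_j >= 0].  At an admissible point [p >= xlow] the hat functions
   form a partition of unity, so [W <= m] everywhere gives
   [W <= theta m] with [theta = (a + K)/(rho + a + K) < 1].  Starting from a
   uniform bound on the bounded sequences and iterating yields [W <= 0]. *)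
From Stdlib Require Import Reals Lra Lia.
From Coquelicot Require Import Coquelicot.
Open Scope R_scope.

Lemma nonpos_of_contraction (I : Type) (P : I -> Prop) (W : I -> R) (theta : R) :
  0 <= theta < 1 ->
  (exists B, forall x, P x -> W x <= B) ->
  (forall m, 0 <= m -> (forall x, P x -> W x <= m) ->
     forall x, P x -> W x <= theta * m) ->
  forall x, P x -> W x <= 0.
Proof.
  intros Htheta [B HB] Hstep.
  set (B' := Rmax B 0).
  assert (Hiter : forall n x, P x -> W x <= theta ^ n * B').
  { induction n as [|n IHn]; intros x Hx.
    - rewrite pow_O, Rmult_1_l. eapply Rle_trans; [apply HB, Hx | apply Rmax_l].
    - rewrite <- tech_pow_Rmult, Rmult_assoc. apply Hstep; [|exact IHn|exact Hx].
      apply Rmult_le_pos; [apply pow_le; lra | apply Rmax_r]. }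
  intros x Hx.
  assert (Hlim : is_lim_seq (fun n => theta ^ n * B') 0).
  { replace (Finite 0) with (Rbar_mult 0 B') by (simpl; f_equal; ring).
    apply is_lim_seq_scal_r, is_lim_seq_geom. rewrite Rabs_pos_eq; lra. }
  exact (is_lim_seq_le (fun _ => W x) _ (W x) 0
           (fun n => Hiter n x Hx) (is_lim_seq_const _) Hlim).
Qed.

Lemma Series_two_terms (a : nat -> R) (N : nat) :
  (forall k, k <> N -> k <> S N -> a k = 0) -> Series a = a N + a (S N).
Proof.
  intros Ha. apply is_series_unique.
  assert (Hbefore : forall n, (n < N)%nat -> sum_n a n = 0).
  { induction n as [|n IHn]; intros Hn.
    - rewrite sum_O. apply Ha; lia.
    - rewrite sum_Sn, IHn, (Ha (S n)) by lia. unfold plus; simpl; ring. }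
  assert (Hafter : forall n, (S N <= n)%nat -> sum_n a n = a N + a (S N)).
  { induction n as [|n IHn]; intros Hn; [lia|].
    rewrite sum_Sn. unfold plus; simpl.
    destruct (Nat.eq_dec n N) as [->|Hne].
    - destruct N as [|N]; [rewrite sum_O; reflexivity|].
      rewrite sum_Sn, Hbefore by lia. unfold plus; simpl; ring.
    - rewrite IHn, (Ha (S n)) by lia. ring. }
  change (is_lim_seq (sum_n a) (a N + a (S N))).
  apply is_lim_seq_ext_loc with (fun _ => a N + a (S N)).
  - exists (S N). intros n Hn. symmetry. apply Hafter. lia.
  - apply is_lim_seq_const.
Qed.

Section HatBasis.

Variables (xlow dx : R).
Hypothesis Hdx : 0 < dx.

Lemma beta_rescaled k p :
  beta xlow dx k p = Rmax 0 (1 - Rabs ((p - xlow) / dx - INR k)).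
Proof.
  unfold beta, grid. do 2 f_equal.
  replace (p - (xlow + INR k * dx)) with (dx * ((p - xlow) / dx - INR k)) by (field; lra).
  rewrite Rabs_mult, (Rabs_pos_eq dx) by lra. field. lra.
Qed.

Lemma beta_two_point_support p : xlow <= p ->
  exists N w, 0 <= w <= 1 /\
    beta xlow dx N p = 1 - w /\ beta xlow dx (S N) p = w /\
    forall k, k <> N -> k <> S N -> beta xlow dx k p = 0.
Proof.
  intros Hp.
  set (s := (p - xlow) / dx).
  assert (Hs : 0 <= s) by (unfold s; apply Rdiv_le_0_compat; lra).
  destruct (nfloor_ex s Hs) as [N HN].
  exists N, (s - INR N).
  repeat split; try lra.
  - rewrite beta_rescaled; fold s. rewrite Rabs_pos_eq, Rmax_right; lra.
  - rewrite beta_rescaled; fold s. rewrite S_INR, Rabs_left1, Rmax_right; lra.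
  - intros k HkN HkSN. rewrite beta_rescaled; fold s. apply Rmax_left.
    destruct (Nat.lt_ge_cases k N) as [Hk|Hk].
    + assert (INR k + 1 <= INR N) by (rewrite <- S_INR; apply le_INR; lia).
      rewrite Rabs_pos_eq; lra.
    + assert (INR N + 2 <= INR k).
      { replace 2 with (INR 2) by (simpl; ring). rewrite <- plus_INR. apply le_INR; lia. }
      rewrite Rabs_left1; lra.
Qed.

Lemma Series_beta_diff_le (U V : nat -> R) (p m : R) : xlow <= p ->
  (forall k, U k - V k <= m) ->
  Series (fun k => beta xlow dx k p * U k) - Series (fun k => beta xlow dx k p * V k) <= m.
Proof.
  intros Hp HUV.
  destruct (beta_two_point_support p Hp) as (N & w & Hw & HbN & HbSN & Hb0).
  rewrite !(Series_two_terms _ N) by (intros k HkN HkSN; rewrite Hb0 by assumption; ring).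
  rewrite HbN, HbSN.
  pose proof (Rmult_le_compat_l (1 - w) _ _ ltac:(lra) (HUV N)).
  pose proof (Rmult_le_compat_l w _ _ ltac:(lra) (HUV (S N))).
  lra.
Qed.

End HatBasis.

Section SchemeComparison.

Variables (rho r gamma xlow h dx : R) (y lam : nat -> R).
Hypotheses (Hrho : 0 < rho) (Hh : 0 < h) (Hdx : 0 < dx) (Hrhoh : rho * h < 1).

Definition jump_coef j := (1 - rho * h) * lam j.
Definition transport_coef j := (1 - rho * h) * (1 - lam j * h) / h.
Definition contraction_factor j :=
  (jump_coef j + transport_coef j) / (rho + jump_coef j + transport_coef j).

Variable j : nat.
Hypotheses (Hlam : 0 <= lam j) (Hlamh : lam j * h < 1).

Lemma jump_coef_ge0 : 0 <= jump_coef j.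
Proof. unfold jump_coef. apply Rmult_le_pos; lra. Qed.

Lemma transport_coef_gt0 : 0 < transport_coef j.
Proof.
  unfold transport_coef. apply Rdiv_lt_0_compat; [apply Rmult_lt_0_compat|]; lra.
Qed.

Lemma contraction_factor_bounds : 0 <= contraction_factor j < 1.
Proof.
  pose proof jump_coef_ge0; pose proof transport_coef_gt0.
  unfold contraction_factor. split.
  - apply Rdiv_le_0_compat; lra.
  - apply (Rdiv_lt_1 (jump_coef j + transport_coef j)); lra.
Qed.

Lemma Fscheme_le0_control_pos i c qj qjb U :
  Rbar_le (Fscheme rho r gamma y lam xlow h dx j i c qj qjb U) (Finite 0) -> 0 < c.
Proof.
  unfold Fscheme, util. destruct (Rlt_dec 0 c) as [Hc|Hc]; simpl; tauto.
Qed.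

Lemma Fscheme_finite i c qj qjb U : 0 < c ->
  Fscheme rho r gamma y lam xlow h dx j i c qj qjb U =
  Finite (rho * qj - jump_coef j * (qjb - qj) -
    (Rpower c (1 - gamma) / (1 - gamma) + transport_coef j *
       (Series (fun k => beta xlow dx k (grid xlow dx i + h * drift r y xlow dx i j c) * U k)
        - qj))).
Proof.
  intros Hc. unfold Fscheme, util. destruct (Rlt_dec 0 c) as [_|]; [|lra].
  reflexivity.
Qed.

Lemma Fscheme_comparison_step i c (qU qUb qV qVb : R) (U V : nat -> R) (m : R) :
  xlow <= grid xlow dx i + h * drift r y xlow dx i j c ->
  Rbar_le (Fscheme rho r gamma y lam xlow h dx j i c qU qUb U) (Finite 0) ->
  Rbar_le (Finite 0) (Fscheme rho r gamma y lam xlow h dx j i c qV qVb V) ->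
  qUb - qVb <= m -> (forall k, U k - V k <= m) ->
  qU - qV <= contraction_factor j * m.
Proof.
  intros Hadm HU HV Hjump Htransport.
  pose proof (Fscheme_le0_control_pos _ _ _ _ _ HU) as Hc.
  rewrite Fscheme_finite in HU, HV by exact Hc. simpl in HU, HV.
  pose proof (Series_beta_diff_le _ _ Hdx U V _ m Hadm Htransport) as Hinterp.
  set (SU := Series _) in *. set (SV := Series _) in *.
  pose proof jump_coef_ge0; pose proof transport_coef_gt0.
  set (a := jump_coef j) in *. set (K := transport_coef j) in *.
  assert (Hdiff : (rho + a + K) * (qU - qV) <= (a + K) * m).
  { pose proof (Rmult_le_compat_l a _ _ ltac:(lra) Hjump).
    pose proof (Rmult_le_compat_l K _ _ ltac:(lra) Hinterp).
    lra. }
  unfold contraction_factor; fold a K.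
  apply Rmult_le_reg_l with (rho + a + K); [lra|].
  replace ((rho + a + K) * ((a + K) / (rho + a + K) * m)) with ((a + K) * m)
    by (field; lra).
  exact Hdiff.
Qed.

End SchemeComparison.

Lemma bounded_regimes_diff_ub (U V : nat -> nat -> R) :
  (forall j, (j = 1 \/ j = 2)%nat -> bounded_seq (fun i => U i j)) ->
  (forall j, (j = 1 \/ j = 2)%nat -> bounded_seq (fun i => V i j)) ->
  exists B, forall i j, (j = 1 \/ j = 2)%nat -> U i j - V i j <= B.
Proof.
  intros HU HV.
  destruct (HU 1%nat (or_introl eq_refl)) as [MU1 HU1].
  destruct (HU 2%nat (or_intror eq_refl)) as [MU2 HU2].
  destruct (HV 1%nat (or_introl eq_refl)) as [MV1 HV1].
  destruct (HV 2%nat (or_intror eq_refl)) as [MV2 HV2].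
  exists (Rmax (MU1 + MV1) (MU2 + MV2)).
  intros i j Hj.
  assert (Hdiff : forall a b Ma Mb, Rabs a <= Ma -> Rabs b <= Mb -> a - b <= Ma + Mb).
  { intros a b Ma Mb Ha Hb.
    pose proof (Rle_abs a); pose proof (Rle_abs (- b)); rewrite Rabs_Ropp in *. lra. }
  destruct Hj as [-> | ->].
  - eapply Rle_trans; [apply Hdiff; [apply HU1|apply HV1] | apply Rmax_l].
  - eapply Rle_trans; [apply Hdiff; [apply HU2|apply HV2] | apply Rmax_r].
Qed.

Theorem mainTheorem12
  (rho r gamma xlow : R) (y lam : nat -> R) (h dx : R)
  (Hrho : 0 < rho) (Hr : r < rho)
  (Hy1 : 0 < y 1%nat) (Hy12 : y 1%nat < y 2%nat) (Hgamma : 1 < gamma)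
  (Hxlow : xlow <= 0)
  (Hxy : forall j, (j = 1 \/ j = 2)%nat -> rho * xlow + y j > 0)
  (Hlam : forall j, (j = 1 \/ j = 2)%nat -> 0 <= lam j)
  (Hh : 0 < h) (Hdx : 0 < dx) (Hrhoh : rho * h < 1)
  (Hlamh : forall j, (j = 1 \/ j = 2)%nat -> lam j * h < 1)
  (c : nat -> nat -> R)
  (Hc : forall i j, (j = 1 \/ j = 2)%nat -> admissible r y xlow h dx i j (c i j))
  (U V : nat -> nat -> R)
  (HUb : forall j, (j = 1 \/ j = 2)%nat -> bounded_seq (fun i => U i j))
  (HVb : forall j, (j = 1 \/ j = 2)%nat -> bounded_seq (fun i => V i j))
  (HU : forall i j, (j = 1 \/ j = 2)%nat ->
     Rbar_le (Fscheme rho r gamma y lam xlow h dx j i (c i j) (U i j) (U i (jbar j))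
                (fun k => U k j)) (Finite 0))
  (HV : forall i j, (j = 1 \/ j = 2)%nat ->
     Rbar_le (Finite 0) (Fscheme rho r gamma y lam xlow h dx j i (c i j) (V i j) (V i (jbar j))
                (fun k => V k j))) :
  forall i j, (j = 1 \/ j = 2)%nat -> U i j <= V i j.
Proof.
  set (regime := fun ij : nat * nat => (snd ij = 1 \/ snd ij = 2)%nat).
  set (W := fun ij : nat * nat => U (fst ij) (snd ij) - V (fst ij) (snd ij)).
  set (theta := Rmax (contraction_factor rho h lam 1) (contraction_factor rho h lam 2)).
  pose proof (contraction_factor_bounds rho h lam Hrho Hh Hrhoh 1
                (Hlam 1%nat (or_introl eq_refl)) (Hlamh 1%nat (or_introl eq_refl))).
  pose proof (contraction_factor_bounds rho h lam Hrho Hh Hrhoh 2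
                (Hlam 2%nat (or_intror eq_refl)) (Hlamh 2%nat (or_intror eq_refl))).
  assert (Htheta : 0 <= theta < 1).
  { split; [eapply Rle_trans; [|apply Rmax_l]|apply Rmax_lub_lt]; lra. }
  assert (Hbound : exists B, forall ij, regime ij -> W ij <= B).
  { destruct (bounded_regimes_diff_ub U V HUb HVb) as [B HB].
    exists B. intros [i j]. apply HB. }
  assert (Hstep : forall m, 0 <= m -> (forall ij, regime ij -> W ij <= m) ->
            forall ij, regime ij -> W ij <= theta * m).
  { intros m Hm HWm [i j] Hj; unfold regime in Hj; simpl in Hj.
    assert (Hjb : regime (i, jbar j)) by (destruct Hj as [-> | ->]; [right|left]; reflexivity).
    assert (Htheta_j : contraction_factor rho h lam j <= theta)
      by (destruct Hj as [-> | ->]; [apply Rmax_l|apply Rmax_r]).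
    eapply Rle_trans; [|apply Rmult_le_compat_r; [exact Hm|exact Htheta_j]].
    apply (Fscheme_comparison_step rho r gamma xlow h dx y lam Hrho Hh Hdx Hrhoh j
             (Hlam j Hj) (Hlamh j Hj) i (c i j) _ (U i (jbar j)) _ (V i (jbar j))
             (fun k => U k j) (fun k => V k j)); auto.
    - apply Rge_le, (Hc i j Hj).
    - exact (HWm _ Hjb).
    - intros k. exact (HWm (k, j) Hj). }
  intros i j Hj.
  pose proof (nonpos_of_contraction _ regime W theta Htheta Hbound Hstep (i, j) Hj).
  unfold W in *; simpl in *. lra.
Qed.
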